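(* $\mathfrak{mc}(\mathsf{meager},\subseteq)=\operatorname{non}(\mathsf{meager})$ and $\mathfrak{mac}(\mathsf{meager}\setminus\{\emptyset\},\subseteq)=\mathfrak{c}$.
   Context: $\mathsf{meager}$ is the ideal of meager subsets of $2^\omega$, ordered by inclusion. For a poset $P$, a chain (antichain) is a set of pairwise comparable (pairwise incomparable) elements; $\mathfrak{mc}(P)$ and $\mathfrak{mac}(P)$ are the minimal cardinalities of a maximal (under inclusion) chain and of a maximal antichain, respectively. $\operatorname{non}(\mathsf{meager})$ is the minimal size of a non-meager subset of $2^\omega$. $\mathfrak{c}=2^{\aleph_0}$. *)

From HB Require Import structures.
From mathcomp Require Import all_boot all_order all_algebra.
From mathcomp Require Import all_classical all_reals all_analysis.
Set Implicit Arguments. Unset Strict Implicit. Unset Printing Implicit Defensive.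
Local Open Scope classical_set_scope.

Notation C2 := cantor_space.

Definition nowhere_dense_set (T : topologicalType) (A : set T) : Prop :=
  interior (closure A) = set0.

Definition meager_set (T : topologicalType) (A : set T) : Prop :=
  exists F : nat -> set T, (forall n, nowhere_dense_set (F n)) /\
    A `<=` \bigcup_n F n.

Definition meager_ideal : set (set C2) := [set A | meager_set A].

Definition meager_ideal_nonempty : set (set C2) := meager_ideal `\` [set set0].

Definition is_chain (T : Type) (P C : set (set T)) : Prop :=
  C `<=` P /\ forall X Y, C X -> C Y -> X `<=` Y \/ Y `<=` X.

Definition is_antichain (T : Type) (P A : set (set T)) : Prop :=
  A `<=` P /\ forall X Y, A X -> A Y -> X <> Y -> ~ (X `<=` Y) /\ ~ (Y `<=` X).

Definition maximal_chain (T : Type) (P C : set (set T)) : Prop :=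
  is_chain P C /\ forall C', is_chain P C' -> C `<=` C' -> C' = C.

Definition maximal_antichain (T : Type) (P A : set (set T)) : Prop :=
  is_antichain P A /\ forall A', is_antichain P A' -> A `<=` A' -> A' = A.

(* Apart from the topology, everything holds for an abstract ideal I of
   subsets of a type T that contains the singletons:
   - (mc >= non) if I is proper, the union W of a maximal chain C is not in I,
     and x |-> the least member of C containing x injects W into C;
   - (mc <= non) given N not in I and a well-order of T, the members of I that
     are initial segments of N form a maximal chain, injected into N by
     D |-> the least point of N outside D;
   - (mac <= |T|) the singletons form a maximal antichain of I \ {∅};
   - (mac >= |T|) if every member of I misses |T| points and T carries |T|
     pairwise disjoint members of I of size |T| each, every maximal antichain
     of I \ {∅} has size at least |T|.
   The topological half shows that the meager ideal meets these hypotheses: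
   a Cantor scheme embeds 2^omega into the complement of any meager set, and
   the slices {x | x(2n) = t(n) for all n} are disjoint meager copies of
   2^omega. *)

From HB Require Import structures.
From mathcomp Require Import all_boot all_order all_algebra.
From mathcomp Require Import all_classical all_reals all_analysis.
From mathcomp Require Import wochoice.
Local Open Scope classical_set_scope.
Local Open Scope card_scope.
Set Implicit Arguments. Unset Strict Implicit. Unset Printing Implicit Defensive.

Lemma card_le_rel (T U : Type) (A : set T) (B : set U) (R : T -> U -> Prop) :
  (forall x, A x -> exists2 y, B y & R x y) ->
  (forall x x' y, A x -> A x' -> R x y -> R x' y -> x = x') -> A #<= B.
Proof.
move=> total functional.
have [[u0 _]|noU] := pselect (exists u : U, True); last first.
  suff -> : A = set0 by exact: card_ge0.
  by apply/seteqP; split => // x /total [y _ _]; apply: noU; exists y.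
have /choice [f Hf] : forall x, exists y, A x -> B y /\ R x y.
  move=> x; have [/total [y By Rxy]|nAx] := pselect (A x).
    by exists y.
  by exists u0 => /nAx.
have : $|{injfun A >-> B}|.
  apply/injfunPex; exists f => [x /Hf [] //|x x' /[!in_setE] Ax Ax' fx].
  have [_ Rx] := Hf x Ax; have [_ Rx'] := Hf x' Ax'.
  by apply: (functional x x' (f x)) => //; rewrite fx.
by case=> g; apply/card_leP; squash (sigLR g).
Qed.

Definition well_ordered (T : Type) (R : T -> T -> Prop) :=
  (forall x y, R x y -> R y x -> x = y) /\
  forall P : set T, P !=set0 -> exists2 m, P m & forall y, P y -> R m y.

Lemma well_ordered_exists (T : eqType) : exists R : T -> T -> Prop, well_ordered R.
Proof.
have [R Rwo] := well_ordering_principle T.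
have Rchain : wo_chain R predT by move=> B _; exact: Rwo.
exists (fun x y => R x y); split.
  by move=> x y Rxy Ryx; apply: (wo_chain_antisymmetric Rchain); rewrite ?Rxy.
move=> P [x Px].
have [|m [[Pm lbm] _]] := Rwo [pred y | `[< P y >]]; first by exists x; rewrite inE.
by exists m => [|y Py]; [move: Pm | apply: lbm]; rewrite inE.
Qed.

(* The order axioms for a well-order, each read off the least element of a
   set of at most three points. *)
Section WellOrderFacts.
Variables (T : Type) (R : T -> T -> Prop).
Hypothesis R_wo : well_ordered R.

Let least_of (P : set T) (x : T) : P x -> exists2 m, P m & forall y, P y -> R m y.
Proof. by move=> Px; apply: R_wo.2; exists x. Qed.

Lemma wo_refl x : R x x.
Proof. by have [m -> lbm] := @least_of [set x] x erefl; apply: lbm. Qed.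

Lemma wo_total x y : R x y \/ R y x.
Proof.
have [m [->|->] lbm] := @least_of [set z | z = x \/ z = y] x (or_introl erefl).
- by left; apply: lbm; right.
- by right; apply: lbm; left.
Qed.

Lemma wo_trans x y z : R x y -> R y z -> R x z.
Proof.
move=> Rxy Ryz.
have [m [->|[->|->]] lbm] :=
  @least_of [set w | w = x \/ w = y \/ w = z] x (or_introl erefl).
- by apply: lbm; right; right.
- by rewrite (R_wo.1 _ _ Rxy (lbm x (or_introl erefl))).
- by rewrite -(R_wo.1 _ _ Ryz (lbm y (or_intror (or_introl erefl)))).
Qed.

End WellOrderFacts.

Section MaximalFamilies.
Variables (T : Type) (P : set (set T)).

Lemma maximal_chain_comparable (C : set (set T)) (Z : set T) :
  maximal_chain P C -> P Z -> (forall X, C X -> X `<=` Z \/ Z `<=` X) -> C Z.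
Proof.
move=> [[CP Cchain] Cmax] PZ Zcmp.
have CZchain : is_chain P (C `|` [set Z]).
  split=> [X [/CP //|-> //]|X Y [CX|->] [CY|->]].
  - exact: Cchain.
  - exact: Zcmp.
  - by case: (Zcmp Y CY); [right|left].
  - by left.
by rewrite -(Cmax _ CZchain (@subsetUl _ C [set Z])); right.
Qed.

Lemma maximal_antichain_comparable (A : set (set T)) (Z : set T) :
  maximal_antichain P A -> P Z -> exists2 W, A W & (Z `<=` W \/ W `<=` Z).
Proof.
move=> [[AP Aanti] Amax] PZ; apply: contrapT => noW.
have incmp W : A W -> ~ Z `<=` W /\ ~ W `<=` Z.
  by move=> AW; split=> sub; apply: noW; exists W => //; [left | right].
have AZanti : is_antichain P (A `|` [set Z]).
  split=> [X [/AP //|-> //]|X Y [AX|->] [AY|->] XY].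
  - exact: Aanti.
  - by have [] := incmp X AX.
  - by have [] := incmp Y AY.
  - by [].
have AZ : A Z by rewrite -(Amax _ AZanti (@subsetUl _ A [set Z])); right.
by apply: noW; exists Z => //; left.
Qed.

End MaximalFamilies.

Section IdealInvariants.
Variables (T : Type) (I : set (set T)).
Hypothesis I_sub : forall A B, A `<=` B -> I B -> I A.
Hypothesis I_setU : forall A B, I A -> I B -> I (A `|` B).
Hypothesis I_set1 : forall x, I [set x].

Lemma I_setU1 (A : set T) (x : T) : I A -> I (A `|` [set x]).
Proof. by move=> IA; apply: I_setU. Qed.

Local Notation Iplus := (I `\` [set set0]).

Lemma Iplus_of (Z : set T) (x : T) : I Z -> Z x -> Iplus Z.
Proof. by move=> IZ Zx; split=> //= Z0; rewrite Z0 in Zx. Qed.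

Definition chain_hull (C : set (set T)) (x : T) : set T :=
  [set w | forall Y, C Y -> Y x -> Y w].

Section MaximalChain.
Hypothesis I_proper : ~ I [set: T].
Variable C : set (set T).
Hypothesis C_max : maximal_chain I C.

Let C_sub : C `<=` I := C_max.1.1.
Let C_chain : forall X Y, C X -> C Y -> X `<=` Y \/ Y `<=` X := C_max.1.2.
Let W := \bigcup_(X in C) X.

Lemma chain_hull_above (Y : set T) (x : T) : C Y -> ~ Y x -> Y `<=` chain_hull C x.
Proof.
move=> CY nYx w Yw Y' CY' Y'x.
by case: (C_chain CY CY') => [/(_ w Yw) //|/(_ x Y'x)].
Qed.

(* The hull of a point of the union is itself a member of C: it lies in I
   and is comparable with every member of C. *)
Lemma chain_hull_mem (x : T) : W x -> C (chain_hull C x).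
Proof.
move=> [Y0 CY0 Y0x]; apply: (maximal_chain_comparable C_max).
  by apply: (I_sub _ (C_sub CY0)) => w; apply.
move=> Y CY; have [Yx|nYx] := pselect (Y x); first by right=> w; apply.
by left; exact: chain_hull_above.
Qed.

(* The union of a maximal chain is not in I: otherwise the union plus a point
   outside it would extend the chain. *)
Lemma chain_union_big : ~ I W.
Proof.
have W_ub (Z : set T) : W `<=` Z -> forall X, C X -> X `<=` Z \/ Z `<=` X.
  by move=> WZ X CX; left=> w Xw; apply: WZ; exists X.
move=> IW; have [p Wp] : ~` W !=set0.
  by apply/set0P/eqP => W0; apply: I_proper; rewrite -setC0 -W0 setCK.
have CWp : C (W `|` [set p]).
  by apply: (maximal_chain_comparable C_max); [exact: I_setU1 | apply: W_ub => w; left].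
by apply: Wp; exists (W `|` [set p]); last right.
Qed.

(* Distinct points have distinct hulls: if hull x = hull x' with x <> x',
   then hull x minus x is a member of C containing x' but not x. *)
Lemma chain_hull_inj (x x' : T) : W x -> W x' ->
  chain_hull C x = chain_hull C x' -> x = x'.
Proof.
move=> Wx Wx' hull_eq; apply: contrapT => xx'.
have CX : C (chain_hull C x `\ x).
  apply: (maximal_chain_comparable C_max).
    by apply: (I_sub (@subDsetl _ _ _)); exact: C_sub (chain_hull_mem Wx).
  move=> Y CY; have [Yx|nYx] := pselect (Y x).
    by right=> w [hw _]; exact: hw.
  left=> w Yw; split; first exact: chain_hull_above nYx w Yw.
  by move=> /= wx; apply: nYx; rewrite -wx.
have hull_x' : (chain_hull C x `\ x) x'.
  by split; [rewrite hull_eq => Y _ | move=> /= e; apply: xx'].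
have /(_ _ CX hull_x') [_] : chain_hull C x' x by rewrite -hull_eq => Y _.
exact.
Qed.

Lemma mc_ge_non : exists N : set T, ~ I N /\ N #<= C.
Proof.
exists W; split; first exact: chain_union_big.
apply: (@card_le_rel _ _ _ _ (fun x X => X = chain_hull C x)).
  by move=> x Wx; exists (chain_hull C x); first exact: chain_hull_mem.
by move=> x x' _ Wx Wx' -> /(chain_hull_inj Wx Wx').
Qed.

End MaximalChain.

Section InitialSegments.
Variables (R : T -> T -> Prop) (N : set T).
Hypotheses (R_wo : well_ordered R) (N_big : ~ I N).

Definition initial_segment (x : T) : set T := [set y | N y /\ R y x].

Definition small_initial_sets : set (set T) :=
  [set D | I D /\ D `<=` N /\ forall a b, N a -> D b -> R a b -> D a].

Local Notation S := small_initial_sets.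

Lemma small_initial_comparable (D1 D2 : set T) : S D1 -> S D2 ->
  D1 `<=` D2 \/ D2 `<=` D1.
Proof.
move=> [_ [N1 down1]] [_ [N2 down2]].
have [sub12|/existsNP [a /not_implyP [D1a nD2a]]] := pselect (D1 `<=` D2); first by left.
right=> b D2b; have [Rab|Rba] := wo_total R_wo a b.
  by have := down2 _ _ (N1 a D1a) D2b Rab.
exact: down1 _ _ (N2 b D2b) D1a Rba.
Qed.

Lemma initial_segment_small (x : T) : I (initial_segment x) -> S (initial_segment x).
Proof.
move=> Ix; split=> //; split=> [y []//|a b Na [Nb Rbx] Rab].
exact: (conj Na (wo_trans R_wo Rab Rbx)).
Qed.

Definition least_outside (D : set T) (m : T) : Prop :=
  N m /\ ~ D m /\ forall y, N y -> ~ D y -> R m y.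

Lemma least_outside_exists (D : set T) : I D -> exists m, least_outside D m.
Proof.
move=> ID; have [x0 [Nx0 nDx0]] : exists x, N x /\ ~ D x.
  apply: contrapT => /forallNP outD; apply/N_big/(I_sub _ ID) => x Nx.
  by apply: contrapT => /(conj Nx)/outD.
have [m [Nm nDm] least_m] :=
  R_wo.2 [set x | N x /\ ~ D x] (ex_intro _ x0 (conj Nx0 nDx0)).
by exists m; split=> //; split=> // y Ny nDy; exact: (least_m y (conj Ny nDy)).
Qed.

(* The points of N with an I-small initial segment do not form a member of I:
   otherwise the least point of N beyond them would have one too. *)
Lemma small_segments_big : ~ I [set x | N x /\ I (initial_segment x)].
Proof.
set U := [set x | _ /\ _] => IU.
have [m [Nm [nUm least_m]]] := least_outside_exists IU.
apply: nUm; split=> //; apply: (I_sub _ (I_setU1 m IU)) => y [Ny Rym].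
have [->|ym] := pselect (y = m); [by right | left].
apply: contrapT => nUy; apply: ym.
exact: (R_wo.1 _ _ Rym (least_m y Ny nUy)).
Qed.

(* The small initial sets form a maximal chain: any set comparable with all of
   them lies below one of them (by small_segments_big), hence in I, and is
   closed downwards by comparison with the initial segments of N. *)
Lemma small_initial_maximal : maximal_chain I S.
Proof.
split; first by split=> [D []|]; [|exact: small_initial_comparable].
move=> C' [C'I C'chain] SC'; apply/seteqP; split=> // Z C'Z.
have cmpZ D : S D -> D `<=` Z \/ Z `<=` D by move=> SD; apply: C'chain (SC' _ SD) C'Z.
have [D0 SD0 nD0Z] : exists2 D0, S D0 & ~ D0 `<=` Z.
  apply: contrapT => noD0; apply: small_segments_big.
  apply: (I_sub _ (C'I Z C'Z)) => x [Nx Ix].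
  have : initial_segment x `<=` Z.
    apply: contrapT => nsub; apply: noD0.
    by exists (initial_segment x); first exact: initial_segment_small.
  by apply; split=> //; exact: (wo_refl R_wo).
have ZD0 : Z `<=` D0 by case: (cmpZ D0 SD0).
have [ID0 [ND0 downD0]] := SD0.
split; first exact: I_sub ZD0 ID0.
split=> [z /ZD0 /ND0 //|a z Na Zz Raz].
have Sa : S (initial_segment a).
  apply/initial_segment_small/(I_sub _ ID0) => b [Nb Rba].
  exact: (downD0 _ _ Nb (ZD0 z Zz) (wo_trans R_wo Rba Raz)).
have [sub|sub] := cmpZ _ Sa; first by apply: sub; split=> //; exact: (wo_refl R_wo).
by have [_ Rza] := sub z Zz; rewrite (R_wo.1 _ _ Raz Rza).
Qed.

Lemma least_outside_sub (D1 D2 : set T) (m : T) : S D2 ->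
  least_outside D1 m -> least_outside D2 m -> D2 `<=` D1.
Proof.
move=> [_ [N2 down2]] [Nm [_ least1]] [_ [nD2m _]] a D2a; apply: contrapT => nD1a.
exact/nD2m/(down2 _ _ Nm D2a (least1 a (N2 a D2a) nD1a)).
Qed.

Lemma small_initial_card : S #<= N.
Proof.
apply: (@card_le_rel _ _ _ _ least_outside) => [D [ID _]|D1 D2 m S1 S2 out1 out2].
  by have [m out] := least_outside_exists ID; exists m; first exact: out.1.
apply/seteqP; split.
- exact: (least_outside_sub S1 out2 out1).
- exact: (least_outside_sub S2 out1 out2).
Qed.

End InitialSegments.

Lemma mc_le_non (R : T -> T -> Prop) (N : set T) : well_ordered R -> ~ I N ->
  exists C : set (set T), maximal_chain I C /\ C #<= N.
Proof.
move=> R_wo N_big; exists (small_initial_sets R N).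
by split; [exact: small_initial_maximal | exact: small_initial_card].
Qed.

Definition singletons : set (set T) := [set X | exists x, X = [set x]].

(* Every nonempty member of I contains a singleton, so the singletons form a
   maximal antichain of I \ {∅}. *)
Lemma singletons_maximal_antichain : maximal_antichain Iplus singletons.
Proof.
split.
  split=> [X [x ->]|X Y [x ->] [y ->] xy]; first exact: Iplus_of (I_set1 x) erefl.
  by split=> sub; apply: xy; [rewrite (sub x erefl) | rewrite (sub y erefl)].
move=> A' [A'sub A'anti] sub; apply/seteqP; split=> // Z A'Z.
have [_ /eqP/set0P [z Zz]] := A'sub Z A'Z.
exists z; apply: contrapT => Zz1.
have [_] := A'anti _ _ A'Z (sub _ (ex_intro _ z erefl)) Zz1.
by apply=> y ->.
Qed.

Lemma mac_le_card : exists A : set (set T),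
  maximal_antichain Iplus A /\ A #<= [set: T].
Proof.
exists singletons; split; first exact: singletons_maximal_antichain.
apply: (@card_le_rel _ _ _ _ (fun X x => X = [set x])) => [X [x ->]|X X' x _ _ -> ->//].
by exists x.
Qed.

Section LargeAntichains.
Variable A : set (set T).
Hypothesis A_max : maximal_antichain Iplus A.
Hypothesis I_cosmall :
  forall W, I W -> exists g : T -> T, injective g /\ forall z, ~ W (g z).

Lemma antichain_sub_eq (V W : set T) : A V -> A W -> V `<=` W -> V = W.
Proof.
move=> AV AW VW; apply: contrapT => VneW.
by have [] := A_max.1.2 _ _ AV AW VneW.
Qed.

(* If some W in A contains a copy h(T) of T, then |A| >= |T|: for g(T) a copy
   of T outside W, the members of A comparable with the sets
   Z z = (W \ {h z}) ∪ {g z} are pairwise distinct. *)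
Lemma antichain_large_member (W : set T) :
  A W -> (exists h : T -> T, injective h /\ forall z, W (h z)) -> [set: T] #<= A.
Proof.
move=> AW [h [h_inj hW]]; have IW : I W := (A_max.1.1 W AW).1.
have [g [g_inj gW]] := I_cosmall IW.
pose Z z := (W `\ h z) `|` [set g z].
have IZ z : Iplus (Z z).
  apply: (Iplus_of _ (or_intror erefl : Z z (g z))).
  by apply: (I_sub _ (I_setU1 (g z) IW)) => x [[Wx _]|->]; [left|right].
(* A member of A comparable with Z z contains g z: otherwise it would lie
   strictly inside W. *)
have has_g z V : A V -> Z z `<=` V \/ V `<=` Z z -> V (g z).
  move=> AV [ZV|VZ]; first by apply: ZV; right.
  apply: contrapT => nVg.
  have VWh : V `<=` W `\ h z by move=> x Vx; case: (VZ x Vx) => // xg; rewrite -xg in nVg.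
  have VW := antichain_sub_eq AV AW (fun x Vx => (VWh x Vx).1).
  by have := VWh (h z); rewrite VW => /(_ (hW z)) [_ /(_ erefl)].
(* g(T) meets W nowhere, so a member below Z z contains only g z of g(T). *)
have below z z' V : V `<=` Z z -> V (g z') -> z' = z.
  by move=> VZ /VZ [[/gW]|/g_inj].
(* A member above Z z and Z z' with z <> z' would contain W. *)
have above z z' V : A V -> Z z `<=` V -> Z z' `<=` V -> z = z'.
  move=> AV ZV Z'V; apply: contrapT => zz'.
  have WV : W `<=` V.
    move=> x Wx; have [->|xh] := pselect (x = h z); last by apply: ZV; left.
    by apply: Z'V; left; split; [exact: hW | move/h_inj].
  by apply: (gW z); rewrite (antichain_sub_eq AW AV WV); apply: ZV; right.
apply: (@card_le_rel _ _ _ _ (fun z V => A V /\ (Z z `<=` V \/ V `<=` Z z))).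
  move=> z _; have [V AV cmp] := maximal_antichain_comparable A_max (IZ z).
  by exists V.
move=> z z' V _ _ [AV cmp] [_ cmp'].
have gV := has_g z V AV cmp; have gV' := has_g z' V AV cmp'.
case: cmp => [ZV|VZ]; last exact/esym/(below _ _ _ VZ gV').
by case: cmp' => [Z'V|VZ']; [exact: above AV ZV Z'V | exact: below VZ' gV].
Qed.

Variable Q : T -> set T.
Hypothesis I_Q : forall t, I (Q t).
Hypothesis Q_disjoint : forall t u x, Q t x -> Q u x -> t = u.
Hypothesis Q_large : forall t, exists h : T -> T, injective h /\ forall z, Q t (h z).

(* If no member of A contains some Q t, each Q t contains a member of A, and
   by disjointness these members are distinct. *)
Lemma antichain_below_Q : (forall t W, A W -> ~ Q t `<=` W) -> [set: T] #<= A.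
Proof.
move=> noQW; apply: (@card_le_rel _ _ _ _ (fun t V => A V /\ V `<=` Q t)).
  move=> t _; have [h [_ hQ]] := Q_large t.
  have [V AV [QV|VQ]] := maximal_antichain_comparable A_max (Iplus_of (I_Q t) (hQ t)).
    by have := noQW t V AV QV.
  by exists V.
move=> t u V _ _ [AV Vt] [_ Vu].
have [_ /eqP/set0P [x Vx]] := A_max.1.1 V AV.
exact: (Q_disjoint (Vt x Vx) (Vu x Vx)).
Qed.

Lemma mac_ge_card : [set: T] #<= A.
Proof.
have [[t [W AW QW]]|noQW] := pselect (exists t, exists2 W, A W & Q t `<=` W).
  have [h [h_inj hQ]] := Q_large t.
  by apply: (antichain_large_member AW); exists h; split=> // z; apply: QW.
by apply: antichain_below_Q => t W AW QW; apply: noQW; exists t, W.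
Qed.

End LargeAntichains.

End IdealInvariants.

Section MeagerSets.
Variable X : topologicalType.

Lemma meager_sub (A B : set X) : A `<=` B -> meager_set B -> meager_set A.
Proof. by move=> AB [F [ndF BF]]; exists F; split=> // x /AB /BF. Qed.

Lemma meager_setU (A B : set X) : meager_set A -> meager_set B -> meager_set (A `|` B).
Proof.
move=> [F [ndF AF]] [G [ndG BG]].
exists (fun k => if odd k then G k./2 else F k./2); split=> [k|x [/AF|/BG] [n _ Hn]].
- by case: (odd k).
- by exists n.*2 => //=; rewrite odd_double doubleK.
- by exists n.*2.+1 => //=; rewrite odd_double /= uphalf_double.
Qed.

End MeagerSets.

Definition cylinder (x : C2) (n : nat) : set C2 :=
  [set y | forall i, (i < n)%N -> y i = x i].

(* Cylinders are neighbourhoods: finitely many coordinates are fixed. *)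
Lemma nbhs_cylinder (x : C2) (n : nat) : nbhs x (cylinder x n).
Proof.
elim: n => [|n IHn].
  by apply: filterS filterT => y _ i.
have nbhs_n : nbhs x [set y : C2 | y n = x n].
  have /(_ [set x n]) := @proj_continuous nat (fun _ => bool) n x; apply.
  by move=> b /= ->.
apply: filterS (filterI IHn nbhs_n) => y [yx yn] i; rewrite ltnS leq_eqVlt.
by case/orP => [/eqP -> //|]; exact: yx.
Qed.

(* Cylinders form a neighbourhood base: a sequence of points of ever smaller
   cylinders outside U would converge to x. *)
Lemma cylinder_basis (x : C2) (U : set C2) : nbhs x U -> exists n, cylinder x n `<=` U.
Proof.
move=> Ux; apply: contrapT => /forallNP noCyl.
have /choice [y Hy] : forall n, exists y, cylinder x n y /\ ~ U y.
  by move=> n; have /existsNP [y /not_implyP] := noCyl n; exists y.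
have y_cvg : y @ \oo --> x.
  apply/cvg_sup => N V [V'] [[W] oW <-] WfN WV.
  apply: (filterS WV); rewrite nbhs_simpl; exists N.+1 => // i /= Hi.
  by rewrite (proj1 (Hy i) N Hi).
have [N _ HN] := y_cvg U Ux.
exact: (proj2 (Hy N)) (HN N (leqnn N)).
Qed.

Definition update (x : C2) (j : nat) (b : bool) : C2 :=
  fun i => if i == j then b else x i.

(* A set whose points share a value at arbitrarily late coordinates is
   nowhere dense: flipping such a coordinate leaves any cylinder's trace. *)
Lemma nowhere_dense_fixed (F : set C2) :
  (forall n, exists j b, (n <= j)%N /\ forall w, F w -> w j = b) ->
  nowhere_dense_set F.
Proof.
move=> fixed; apply/seteqP; split=> // x /= /cylinder_basis [n cylF].
have [j [b [nj Fb]]] := fixed n.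
pose y := update x j (~~ b).
have xy : cylinder x n y.
  move=> i Hi; rewrite /y /update; case: eqP => // ij.
  by move: Hi; rewrite ij ltnNge nj.
have [w [Fw yw]] := cylF y xy (cylinder y j.+1) (nbhs_cylinder y j.+1).
by have := Fb w Fw; rewrite (yw j (ltnSn j)) /y /update eqxx; case: (b).
Qed.

Lemma nowhere_dense_escape (F : set C2) : nowhere_dense_set F ->
  forall x n, exists ym : C2 * nat, cylinder x n ym.1 /\ (n < ym.2)%N /\
    forall w, cylinder ym.1 ym.2 w -> ~ F w.
Proof.
move=> ndF x n.
have /existsNP [y /not_implyP [xy nclFy]] : ~ (cylinder x n `<=` closure F).
  move=> sub; have xint : interior (closure F) x.
    by apply: filterS sub (nbhs_cylinder x n).
  by rewrite ndF in xint.
have /existsNP [B /not_implyP [yB FB0]] := nclFy.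
have [m yB'] := cylinder_basis yB.
exists (y, (m + n).+1); split=> //=; split; first by rewrite ltnS leq_addl.
move=> w yw Fw; apply: FB0; exists w; split=> //; apply: yB' => i Hi.
by apply: yw; rewrite ltnS (leq_trans (ltnW Hi)) // leq_addr.
Qed.

Lemma meager_set1 (p : C2) : meager_set [set p].
Proof.
exists (fun _ => [set p]); split=> [_|x ->]; last by exists 0.
by apply: nowhere_dense_fixed => n; exists n, (p n); split=> // w ->.
Qed.

(* The k-th stage for z in 2^omega fixes the next
   coordinate to z k and then escapes F k; the limit point of the stages
   avoids every F k, and distinct z branch apart. *)
Section CantorScheme.
Local Unset Implicit Arguments.
Variable F : nat -> set C2.
Variable escape : nat -> C2 * nat -> C2 * nat.
Hypothesis escapeP : forall k xn,
  cylinder xn.1 xn.2 (escape k xn).1 /\ (xn.2 < (escape k xn).2)%N /\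
  forall w, cylinder (escape k xn).1 (escape k xn).2 w -> ~ F k w.

Fixpoint scheme (z : C2) (k : nat) : C2 * nat :=
  if k is k'.+1 then
    escape k' (update (scheme z k').1 (scheme z k').2 (z k'), (scheme z k').2.+1)
  else (fun _ => false, 0).

Local Notation pt z k := (scheme z k).1.
Local Notation len z k := (scheme z k).2.

Lemma scheme_step (z : C2) (k : nat) : cylinder (pt z k) (len z k) (pt z k.+1) /\
  pt z k.+1 (len z k) = z k /\ (len z k < len z k.+1)%N.
Proof.
have [xy [lt _]] := escapeP k (update (pt z k) (len z k) (z k), (len z k).+1).
split; last split; last exact: ltn_trans (ltnSn _) lt.
- move=> i Hi; rewrite (xy i (ltnW Hi)) /update /=.
  by case: eqP => // ein; move: Hi; rewrite ein ltnn.
- by rewrite (xy _ (ltnSn _)) /update /= eqxx.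
Qed.

Lemma scheme_len_ge (z : C2) (k : nat) : (k <= len z k)%N.
Proof.
elim: k => // k IHk; have [_ [_ lt]] := scheme_step z k.
exact: leq_ltn_trans IHk lt.
Qed.

Lemma scheme_mono (z : C2) (k d : nat) :
  cylinder (pt z k) (len z k) (pt z (k + d)) /\ (len z k <= len z (k + d))%N.
Proof.
elim: d => [|d [IH1 IH2]]; first by rewrite addn0.
have [S1 [_ S3]] := scheme_step z (k + d); rewrite addnS; split.
  by move=> i Hi; rewrite (S1 i (leq_trans Hi IH2)); exact: IH1.
exact: leq_trans IH2 (ltnW S3).
Qed.

Definition scheme_limit (z : C2) : C2 := fun i => pt z i.+1 i.

Lemma scheme_limit_cylinder (z : C2) (k : nat) :
  cylinder (pt z k) (len z k) (scheme_limit z).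
Proof.
move=> i Hi; rewrite /scheme_limit.
have [le|lt] := leqP i.+1 k.
  have [H _] := scheme_mono z i.+1 (k - i.+1).
  rewrite subnKC // in H; rewrite H //.
  exact: leq_trans (ltnSn i) (scheme_len_ge z i.+1).
have [H _] := scheme_mono z k (i.+1 - k).
by rewrite subnKC ?(ltnW lt) // in H; rewrite H.
Qed.

Lemma scheme_limit_avoid (z : C2) (k : nat) : ~ F k (scheme_limit z).
Proof.
have [_ [_ avoid]] := escapeP k (update (pt z k) (len z k) (z k), (len z k).+1).
exact: (avoid (scheme_limit z) (scheme_limit_cylinder z k.+1)).
Qed.

Lemma scheme_prefix (z z' : C2) (k : nat) :
  (forall i, (i < k)%N -> z i = z' i) -> scheme z k = scheme z' k.
Proof.
elim: k => // k IHk zz' /=.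
by rewrite IHk ?zz' // => i Hi; apply: zz'; exact: ltnW.
Qed.

(* At the first k with z k <> z' k the stages agree, and the limits differ at
   the coordinate where stage k+1 records z k. *)
Lemma scheme_limit_inj : injective scheme_limit.
Proof.
move=> z z' lim_eq; apply: functional_extensionality_dep => i; apply: contrapT => zi.
have [k zk kmin] := ex_minnP (ex_intro (fun k => z k != z' k) i (introN eqP zi)).
have pre : scheme z k = scheme z' k.
  apply: scheme_prefix => j Hj; apply/eqP; apply: contraTT Hj => /kmin.
  by rewrite leqNgt.
have [_ [S2 S3]] := scheme_step z k; have [_ [S2' S3']] := scheme_step z' k.
have G1 := scheme_limit_cylinder z k.+1 _ S3.
have G2 := scheme_limit_cylinder z' k.+1 _ S3'.
rewrite S2 in G1; rewrite S2' -pre -lim_eq G1 in G2.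
by move: zk; rewrite G2 eqxx.
Qed.

End CantorScheme.

Lemma meager_complement_embedding (M : set C2) : meager_set M ->
  exists g : C2 -> C2, injective g /\ forall z, ~ M (g z).
Proof.
move=> [F [ndF MF]].
have /choice [escape escapeP] : forall kxn : nat * (C2 * nat), exists ym : C2 * nat,
   cylinder kxn.2.1 kxn.2.2 ym.1 /\ (kxn.2.2 < ym.2)%N /\
    forall w, cylinder ym.1 ym.2 w -> ~ F kxn.1 w.
  by move=> [k [x n]]; exact: nowhere_dense_escape (ndF k) x n.
have escP k xn := escapeP (k, xn).
exists (scheme_limit (fun k xn => escape (k, xn))); split.
  exact: (scheme_limit_inj F _ escP).
by move=> z /MF [k _]; apply: (scheme_limit_avoid F _ escP z k).
Qed.

Lemma meager_not_setT : ~ meager_set [set: C2].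
Proof. by move=> /meager_complement_embedding [g [_ /(_ point)]]; apply. Qed.

Definition even_slice (t : C2) : set C2 := [set x | forall n, x n.*2 = t n].

Definition interleave (t z : C2) : C2 :=
  fun i => if odd i then z i./2 else t i./2.

Lemma interleave_slice (t z : C2) : even_slice t (interleave t z).
Proof. by move=> n; rewrite /interleave odd_double doubleK. Qed.

Lemma interleave_inj (t : C2) : injective (interleave t).
Proof.
move=> z z' tzz'; apply: functional_extensionality_dep => i.
have := congr1 (fun f : C2 => f i.*2.+1) tzz'.
by rewrite /interleave /= odd_double /= uphalf_double.
Qed.

Lemma even_slice_disjoint (t u x : C2) : even_slice t x -> even_slice u x -> t = u.
Proof. by move=> tx ux; apply: functional_extensionality_dep => n; rewrite -tx ux. Qed.

(* Each slice fixes all even coordinates, so it is nowhere dense. *)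
Lemma meager_even_slice (t : C2) : meager_set (even_slice t).
Proof.
exists (fun _ => even_slice t); split=> [_|x tx]; last by exists 0.
apply: nowhere_dense_fixed => n; exists n.*2, (t n); split=> [|w ->//].
by rewrite -addnn leq_addr.
Qed.

Theorem mainTheorem16 :
  (* mc(meager, ⊆) = non(meager) *)
  ((forall C : set (set C2), maximal_chain meager_ideal C ->
      exists N : set C2, ~ meager_set N /\ N #<= C) /\
   (forall N : set C2, ~ meager_set N ->
      exists C : set (set C2), maximal_chain meager_ideal C /\ C #<= N)) /\
  (* mac(meager \ {∅}, ⊆) = c = |2^omega| *)
  ((forall A : set (set C2), maximal_antichain meager_ideal_nonempty A ->
      [set: C2] #<= A) /\
   (exists A : set (set C2), maximal_antichain meager_ideal_nonempty A /\
      A #<= [set: C2])).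
Proof.
have I_sub : forall A B : set C2, A `<=` B -> meager_ideal B -> meager_ideal A.
  exact: meager_sub.
have I_setU : forall A B : set C2,
    meager_ideal A -> meager_ideal B -> meager_ideal (A `|` B).
  exact: meager_setU.
have I_set1 : forall x : C2, meager_ideal [set x] := meager_set1.
have Q_large (t : C2) : exists h : C2 -> C2, injective h /\ forall z, even_slice t (h z).
  by exists (interleave t); split; [exact: interleave_inj | exact: interleave_slice].
have [R R_wo] := well_ordered_exists C2.
split; split.
- by move=> C; apply: (mc_ge_non I_sub I_setU I_set1 meager_not_setT).
- by move=> N; apply: (mc_le_non I_sub I_setU I_set1 R_wo).
- move=> A A_max; apply: (mac_ge_card I_sub I_setU I_set1 A_max).
  + exact: meager_complement_embedding.
  + exact: meager_even_slice.
  + exact: even_slice_disjoint.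
  + exact: Q_large.
- exact: (mac_le_card I_set1).
Qed.
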